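(* Let $n=6k+4$ with $k\geq 1$ an integer, and let $\mathcal{V}_n$ be the latin square defined below. Then $\mathcal{V}_n$ has a transversal, and every suitable diagonal of $\mathcal{V}_n$ contains the $k$ entries $$(1,0,3)\ \text{and}\ (3j+2,\ n-6j,\ n-3j+3)\ \text{for } j=1,\dots,k-1,$$ i.e. the entries $(1,0,3),(5,n-6,0),(8,n-12,n-3),(11,n-18,n-6),\ldots,(3k-1,10,3k+10)$ (all coordinates read modulo $n$).
   Context: Rows, columns and symbols are indexed by $\mathbb{Z}_n=\{0,1,\dots,n-1\}$; all arithmetic on symbols is modulo $n$, and congruence conditions on $a,b$ modulo $2$ or $3$ refer to the representatives in $\{0,\dots,n-1\}$. A latin square is viewed as its set of entries $(r,c,s)$ (symbol $s$ in row $r$, column $c$). For $n=6k+4$, $k\ge1$, the latin square $\mathcal{V}_n$ is defined by $\mathcal{V}_n[a,b]=$ $a+b-1$ if $(a,b)\in\{(1,1),(1,2)\}$; $a+b-2$ if $(a,b)\in\{(3,0),(3,2)\}$; $a+b+1$ if $(a,b)=(0,1)$; $a+b+2$ if $(a,b)=(1,0)$; $a+b+3$ if $b\equiv2\pmod3$ and $a=0$; $a+b-3$ if $b>2$, $b\equiv 2\pmod 3$ and $a=3$; $a+b-2$ if $4\le a\le 3k$, $a\equiv 0\pmod3$ and $b\equiv0\pmod2$; $a+b+2$ if $4\le a\le 3k$, $a\equiv1\pmod3$, $b\equiv0\pmod2$ and $b\ne n-2a+2$; $a+b+1$ if $4\le a\le 3k$, $a\equiv1\pmod 3$ and $b\in\{n-2a+2,n-2a+3\}$;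 $a+b+1$ if $4\le a\le 3k$, $a\equiv2\pmod3$ and $b=n-2a+4$; $a+b-1$ if $4\le a\le 3k$, $a\equiv 2\pmod 3$ and $b=n-2a+5$; $a+b$ otherwise. A transversal is a set of $n$ entries containing each row, column and symbol exactly once. For an entry $(r,c,s)$, $\Delta(r,c,s)$ is the unique integer with $\Delta(r,c,s)\equiv s-r-c\pmod n$ and $-n/2<\Delta(r,c,s)\le n/2$. A suitable diagonal is a set of $n$ entries, no two sharing a row or a column, whose $\Delta$-values sum to something congruent to $n/2$ modulo $n$. *)

From mathcomp Require Import all_boot all_order all_algebra.
Set Implicit Arguments. Unset Strict Implicit. Unset Printing Implicit Defensive.
Import Order.TTheory GRing.Theory Num.Theory.

Notation entry n := ('I_n * 'I_n * 'I_n)%type.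
Definition erow n (e : entry n) : 'I_n := e.1.1.
Definition ecol n (e : entry n) : 'I_n := e.1.2.
Definition esym n (e : entry n) : 'I_n := e.2.

Definition is_ls_transversal n (L S : {set entry n}) : Prop :=
  [/\ S \subset L, #|S| = n,
      forall r : 'I_n, #|[set e in S | erow e == r]| = 1,
      forall c : 'I_n, #|[set e in S | ecol e == c]| = 1 &
      forall s : 'I_n, #|[set e in S | esym e == s]| = 1].

(* Delta(r,c,s): the integer congruent to s - r - c mod n in (-n/2, n/2]
   (n is even in our application). *)
Definition Delta n (e : entry n) : int :=
  let m := ((Posz (esym e) - Posz (erow e) - Posz (ecol e))%R %% Posz n)%Z in
  if (Posz n./2 < m)%R then (m - Posz n)%R else m.

Definition is_ls_suitable_diagonal n (L S : {set entry n}) : Prop :=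
  [/\ S \subset L, #|S| = n,
      {in S &, forall e f, e != f -> (erow e != erow f) && (ecol e != ecol f)} &
      (\sum_(e in S) Delta e == Posz n./2 %[mod Posz n])%Z].

Definition N (k : nat) : nat := (6 * k).+4.

(* Offset V_n[a,b] - (a+b), following the case list in order (first match). *)
Definition Voff (k a b : nat) : int :=
  let n := N k in
  let mid := (4 <= a) && (a <= 3 * k) in
  if (a == 1) && ((b == 1) || (b == 2)) then (-1)%Z
  else if (a == 3) && ((b == 0) || (b == 2)) then (-2)%Z
  else if (a == 0) && (b == 1) then 1%Z
  else if (a == 1) && (b == 0) then 2%Z
  else if (b %% 3 == 2) && (a == 0) then 3%Z
  else if (2 < b) && (b %% 3 == 2) && (a == 3) then (-3)%Z
  else if mid && (a %% 3 == 0) && (b %% 2 == 0) then (-2)%Z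
  else if mid && (a %% 3 == 1) && (b %% 2 == 0) && (b != n - 2 * a + 2) then 2%Z
  else if mid && (a %% 3 == 1) && ((b == n - 2 * a + 2) || (b == n - 2 * a + 3)) then 1%Z
  else if mid && (a %% 3 == 2) && (b == n - 2 * a + 4) then 1%Z
  else if mid && (a %% 3 == 2) && (b == n - 2 * a + 5) then (-1)%Z
  else 0%Z.

Definition Vsym (k : nat) (a b : 'I_(N k)) : 'I_(N k) :=
  inord (absz ((Posz (a + b) + Voff k a b)%R %% Posz (N k))%Z).

Arguments Vsym k a b : clear implicits.

Definition Vsq (k : nat) : {set entry (N k)} :=
  [set e | esym e == Vsym k (erow e) (ecol e)].

Definition mkentry (k r c s : nat) : entry (N k) :=
  (inord (r %% N k), inord (c %% N k), inord (s %% N k)).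

(* On an entry of V the value of Delta is
   exactly Voff (as |Voff| <= 3 < n/2), and in row a it lies between
   Voff_min a and Voff_max a, whose sums over all rows are -(3k+1) > n/2 - n
   and 3k+2 = n/2.  A suitable diagonal meets every row once, so its Delta-sum
   is congruent to n/2 modulo n and lies in (n/2 - n, n/2]: it equals n/2,
   and the diagonal attains Voff_max in every row.  In row 1 this maximum, 2,
   occurs only in column 0, and in row 3j+2 (1 <= j < k) the maximum 1 occurs
   only in column n - 6j, which forces the listed entries.
   The transversal is explicit: transv_col a is a piecewise linear choice of
   column in row a, attaining Voff_max there, for which both the columns and
   the symbols are pairwise distinct. *)

From Pilot Require Import Defs.
From mathcomp Require Import all_boot all_order all_algebra.
From mathcomp Require Import zify.
Set Implicit Arguments. Unset Strict Implicit. Unset Printing Implicit Defensive.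
Import Order.TTheory GRing.Theory Num.Theory.

Section GraphTransversal.
Variables (n : nat) (L : {set entry n}) (col sym : 'I_n -> 'I_n).
Hypotheses (col_inj : injective col) (sym_inj : injective sym).
Hypothesis graph_in_L : forall r, (r, col r, sym r) \in L.

Lemma card_graph_fiber (p : entry n -> 'I_n) (x : 'I_n) :
  injective (fun r => p (r, col r, sym r)) ->
  #|[set e in [set (r, col r, sym r) | r : 'I_n] | p e == x]| = 1.
Proof.
move=> p_inj; have /codomP [r ->] := injF_onto p_inj x.
apply/eqP/cards1P; exists (r, col r, sym r); apply/setP => e; rewrite !inE.
apply/andP/eqP => [[/imsetP [r' _ ->] /eqP /p_inj -> //] | ->].
by split; [apply: imset_f | rewrite eqxx].
Qed.

Lemma graph_transversal : is_ls_transversal L [set (r, col r, sym r) | r : 'I_n].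
Proof.
split.
- by apply/subsetP => _ /imsetP [r _ ->].
- by rewrite card_imset ?card_ord // => r r' [].
- by move=> x; apply: card_graph_fiber.
- by move=> x; apply: card_graph_fiber.
- by move=> x; apply: card_graph_fiber.
Qed.

End GraphTransversal.

Section SuitableDiagonal.
Local Open Scope ring_scope.
Variables (n : nat) (L S : {set entry n}).
Hypothesis diagS : is_ls_suitable_diagonal L S.

Lemma diagonal_row_inj : {in S &, injective (@erow n)}.
Proof.
case: diagS => _ _ distinct _ e f eS fS erow_ef; apply/eqP; apply: contraT => ne_ef.
by have := distinct e f eS fS ne_ef; rewrite erow_ef eqxx.
Qed.

Lemma diagonal_rows : [set erow e | e in S] = setT.
Proof.
case: diagS => _ cardS _ _; apply/eqP.
rewrite eqEcard subsetT cardsT card_ord card_in_imset ?cardS ?leqnn //.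
exact: diagonal_row_inj.
Qed.

Lemma diagonal_row_exists (r : 'I_n) : exists2 e, e \in S & erow e = r.
Proof.
have : r \in [set erow e | e in S] by rewrite diagonal_rows inE.
by case/imsetP => e eS ->; exists e.
Qed.

Lemma sum_diagonal_rows (V : nmodType) (F : 'I_n -> V) :
  \sum_(e in S) F (erow e) = \sum_r F r.
Proof.
by rewrite -(big_imset _ diagonal_row_inj) diagonal_rows; apply: eq_bigl => r; rewrite inE.
Qed.

Variables lo hi : 'I_n -> int.
Hypothesis Delta_bounds : {in L, forall e, lo (erow e) <= Delta e <= hi (erow e)}.
Hypothesis sum_hi : \sum_r hi r = Posz n./2.
Hypothesis sum_lo : Posz n./2 - Posz n < \sum_r lo r.

Lemma sum_Delta_diagonal : \sum_(e in S) Delta e = Posz n./2.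
Proof.
case: diagS => subSL _ _; rewrite eqz_mod_dvd => /dvdzP [q Eq].
have /andP [le_lo le_hi] : \sum_r lo r <= \sum_(e in S) Delta e <= \sum_r hi r.
  rewrite -!sum_diagonal_rows !ler_sum // => e eS;
    by case/andP: (Delta_bounds (subsetP subSL e eS)).
move: Eq le_lo le_hi sum_lo; rewrite sum_hi; move: (\sum_(e in S) _) => X.
have [->|[q_ge1|q_le]] : q = 0 \/ 1 <= q \/ q <= -1 by lia.
- lia.
- nia.
- nia.
Qed.

Lemma diagonal_Delta_max : {in S, forall e, Delta e = hi (erow e)}.
Proof.
case: diagS => subSL _ _ _ e eS.
have Delta_le e' : e' \in S -> 0 <= hi (erow e') - Delta e'.
  by move=> e'S; case/andP: (Delta_bounds (subsetP subSL e' e'S)); lia.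
suff /eqP : hi (erow e) - Delta e = 0 by rewrite subr_eq0 => /eqP.
apply: (psumr_eq0P Delta_le) => //.
by rewrite sumrB sum_diagonal_rows sum_hi sum_Delta_diagonal subrr.
Qed.

End SuitableDiagonal.

Lemma DeltaE n (e : entry n) (v : int) :
  (Posz (Defs.esym e) = (Posz (erow e + ecol e) + v) %% Posz n)%Z ->
  (Posz n./2 - Posz n < v <= Posz n./2)%R -> Delta e = v.
Proof.
move=> Es v_range; rewrite /Delta Es -addrA modzDml.
have -> : (Posz (erow e + ecol e) + v + (- Posz (erow e) - Posz (ecol e)) = v)%R by lia.
have [v_ge0 | v_lt0] := lerP 0 v.
  by rewrite modz_small; [case: ifP; lia | lia].
by rewrite -modzDl modz_small; [case: ifP; lia | lia].
Qed.

Lemma eq_modn_lt3 n x y : x < 3 * n -> y < 3 * n -> x %% n = y %% n ->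
  x = y \/ x = y + n \/ y = x + n \/ x = y + 2 * n \/ y = x + 2 * n.
Proof.
move=> x_lt y_lt eq_mod; have n_gt0 : 0 < n by lia.
have := divn_eq x n; have := divn_eq y n; rewrite eq_mod.
have : x %/ n < 3 by rewrite ltn_divLR // mulnC.
have : y %/ n < 3 by rewrite ltn_divLR // mulnC.
by case: (x %/ n) => [|[|[|?]]] //; case: (y %/ n) => [|[|[|?]]] // *; lia.
Qed.

(* Refuted tests are cleared rather than kept: the negations of the compound
   tests in [Voff] would make every later [lia] call split cases. *)
Ltac case_ifs :=
  repeat (case: ifP; [move=> ?; try lia
                     | let Hf := fresh in move=> Hf; first [exfalso; lia | clear Hf]]);
  lia.

Lemma NE k : N k = 6 * k + 4.
Proof. by rewrite /N; lia. Qed.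

Section Offsets.
Local Open Scope ring_scope.

Lemma sum_period3 (V : nmodType) (G : nat -> V) (m j : nat) :
  \sum_(m <= i < m + 3 * j) G (i %% 3)%N = (G 0%N + G 1%N + G 2%N) *+ j.
Proof.
elim: j => [|j IHj]; first by rewrite muln0 addn0 big_geq.
have -> : (m + 3 * j.+1 = m + 3 * j + 3)%N by lia.
rewrite (@big_cat_nat _ _ _ (m + 3 * j)) ?leq_addr //= IHj mulrS addrC; congr (_ + _).
move: (m + 3 * j)%N => x.
have -> : \sum_(x <= i < x + 3) G (i %% 3)%N =
           G (x %% 3)%N + G (x.+1 %% 3)%N + G (x.+2 %% 3)%N.
  by rewrite addn3 3?big_ltn ?big_geq ?addr0 ?addrA //; lia.
have [x0|[x1|x2]] : (x %% 3 = 0 \/ x %% 3 = 1 \/ x %% 3 = 2)%N by lia.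
- have x1 : (x.+1 %% 3 = 1)%N by lia.
  have x2 : (x.+2 %% 3 = 2)%N by lia.
  by rewrite x0 x1 x2.
- have x2 : (x.+1 %% 3 = 2)%N by lia.
  have x0 : (x.+2 %% 3 = 0)%N by lia.
  by rewrite x0 x1 x2 addrC addrA.
- have x0 : (x.+1 %% 3 = 0)%N by lia.
  have x1 : (x.+2 %% 3 = 1)%N by lia.
  by rewrite x0 x1 x2 -addrA addrC.
Qed.

Variable k : nat.

Definition Voff_max (a : nat) : int :=
  if a == 0%N then 3 else if a == 1%N then 2
  else if (4 <= a <= 3 * k)%N then [:: 0; 2; 1]`_(a %% 3) else 0.

Definition Voff_min (a : nat) : int :=
  if a == 1%N then -1 else if a == 3%N then -3
  else if (4 <= a <= 3 * k)%N then [:: -2; 0; -1]`_(a %% 3) else 0.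

Lemma Voff_range a b : -3 <= Voff k a b <= 3.
Proof. by rewrite /Voff; case_ifs. Qed.

Lemma Voff_bounds a b : Voff_min a <= Voff k a b <= Voff_max a.
Proof.
have [a0|[a1|a2]] : (a %% 3 = 0 \/ a %% 3 = 1 \/ a %% 3 = 2)%N by lia.
all: by rewrite /Voff_min /Voff_max /Voff ?a0 ?a1 ?a2 /=; case_ifs.
Qed.

Lemma Voff_row1_max b : Voff k 1 b = 2 -> b = 0%N.
Proof. by rewrite /Voff; case_ifs. Qed.

Lemma Voff_row2mod3_max a b : (4 <= a <= 3 * k)%N -> (a %% 3 = 2)%N -> Voff k a b = 1 ->
  b = (N k - 2 * a + 4)%N.
Proof. by move=> a_mid a_mod3; rewrite /Voff; case_ifs. Qed.

Hypothesis k_gt0 : (0 < k)%N.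

Lemma sum_rows_split (V : nmodType) (F : nat -> V) :
  (forall r, (3 * k < r)%N -> F r = 0) ->
  \sum_(r < N k) F r = F 0%N + F 1%N + F 2%N + F 3%N + \sum_(4 <= r < 4 + 3 * (k - 1)) F r.
Proof.
move=> F_high.
rewrite -(big_mkord xpredT) (@big_cat_nat _ _ _ (4 + 3 * (k - 1))) /=;
  [|lia | by rewrite NE; lia].
have -> : \sum_(4 + 3 * (k - 1) <= r < N k) F r = 0.
  by rewrite big_nat_cond big1 // => r /andP [/andP [r_ge _] _]; apply: F_high; lia.
rewrite addr0.
rewrite (@big_cat_nat _ _ _ 4 0 (4 + 3 * (k - 1))) ?leq_addr //=.
by rewrite 4?big_ltn // (big_geq (m := 4) (n := 4)) // addr0 !addrA.
Qed.

Lemma sum_Voff_max : \sum_(r < N k) Voff_max r = Posz (N k)./2.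
Proof.
rewrite sum_rows_split => [|r r_high]; last by rewrite /Voff_max; case_ifs.
rewrite (eq_big_nat _ _ (F2 := fun r => [:: 0; 2; 1]`_(r %% 3))) => [|r r_mid]; last first.
  by rewrite /Voff_max; case_ifs.
by rewrite sum_period3 /Voff_max /=; lia.
Qed.

Lemma sum_Voff_min : \sum_(r < N k) Voff_min r = - Posz (3 * k + 1).
Proof.
rewrite sum_rows_split => [|r r_high]; last by rewrite /Voff_min; case_ifs.
rewrite (eq_big_nat _ _ (F2 := fun r => [:: -2; 0; -1]`_(r %% 3))) => [|r r_mid]; last first.
  by rewrite /Voff_min; case_ifs.
by rewrite sum_period3 /Voff_min /=; lia.
Qed.

End Offsets.

Lemma val_Vsym k (r c : 'I_(N k)) :
  Posz (Vsym k r c) = ((Posz (r + c) + Voff k r c) %% Posz (N k))%Z.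
Proof.
have := @modz_ge0 (Posz (r + c) + Voff k r c) (N k) isT.
have := @ltz_pmod (Posz (r + c) + Voff k r c) (N k) isT.
rewrite /Vsym; set m := (_ %% _)%Z => m_lt m_ge0.
rewrite inordK; first by rewrite gez0_abs.
by clearbody m; have := NE k; lia.
Qed.

Definition transv_col k a : nat :=
  if a == 0 then 5 else if a == 1 then 0 else if a == 2 then 3 else if a == 3 then 1
  else if a <= 3 * k then (if a %% 3 == 0 then N k + 7 - 2 * a else N k + 4 - 2 * a)
  else if a <= 3 * k + 4 then N k + 6 - 2 * a
  else if a <= 6 * k + 1 then
    (if a %% 3 == 2 then 2 * N k + 4 - 2 * a else 2 * N k + 7 - 2 * a)
  else 2 * N k + 5 - 2 * a.

Variant transv_col_spec k a : nat -> int -> Prop :=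
  | TCol0 of a = 0 : transv_col_spec k a 5 3%R
  | TCol1 of a = 1 : transv_col_spec k a 0 2%R
  | TCol2 of a = 2 : transv_col_spec k a 3 0%R
  | TCol3 of a = 3 : transv_col_spec k a 1 0%R
  | TColMid0 of 4 <= a <= 3 * k & a %% 3 = 0 : transv_col_spec k a (N k + 7 - 2 * a) 0%R
  | TColMid1 of 4 <= a <= 3 * k & a %% 3 = 1 : transv_col_spec k a (N k + 4 - 2 * a) 2%R
  | TColMid2 of 4 <= a <= 3 * k & a %% 3 = 2 : transv_col_spec k a (N k + 4 - 2 * a) 1%R
  | TColUp of 3 * k < a <= 3 * k + 4 : transv_col_spec k a (N k + 6 - 2 * a) 0%R
  | TColHigh2 of 3 * k + 4 < a <= 6 * k + 1 & a %% 3 = 2 :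
      transv_col_spec k a (2 * N k + 4 - 2 * a) 0%R
  | TColHigh of 3 * k + 4 < a <= 6 * k + 1 & a %% 3 <> 2 :
      transv_col_spec k a (2 * N k + 7 - 2 * a) 0%R
  | TColTop of 6 * k + 1 < a : transv_col_spec k a (2 * N k + 5 - 2 * a) 0%R.

Lemma transv_colP k a : transv_col_spec k a (transv_col k a) (Voff_max k a).
Proof.
rewrite /transv_col /Voff_max.
have [a_mod|[a_mod|a_mod]] : a %% 3 = 0 \/ a %% 3 = 1 \/ a %% 3 = 2 by lia.
(* Unlike in [case_ifs], the refuted tests are kept: they bound a from below. *)
all: rewrite a_mod /=; repeat (case: ifP => ?; try (exfalso; lia)).
all: constructor; lia.
Qed.

Definition transv_sym k a := a + transv_col k a + `|Voff_max k a|.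

Section Transversal.
Variable k : nat.
Hypothesis k_gt0 : 0 < k.

Lemma transv_col_lt a : a < N k -> transv_col k a < N k.
Proof. by move: (NE k); case: (transv_colP k a) => *; lia. Qed.

Lemma transv_col_inj a a' :
  a < N k -> a' < N k -> transv_col k a = transv_col k a' -> a = a'.
Proof. by move: (NE k); case: (transv_colP k a); case: (transv_colP k a') => *; lia. Qed.

Lemma Voff_transv_col a : a < N k -> Voff k a (transv_col k a) = Voff_max k a.
Proof. by move: (NE k); case: (transv_colP k a) => *; rewrite /Voff; case_ifs. Qed.

Lemma transv_sym_lt a : a < N k -> transv_sym k a < 3 * N k.
Proof. by rewrite /transv_sym; move: (NE k); case: (transv_colP k a) => *; lia. Qed.

Lemma transv_sym_inj a a' :
  a < N k -> a' < N k -> transv_sym k a = transv_sym k a' %[mod N k] -> a = a'.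
Proof.
move=> a_lt a'_lt /(eq_modn_lt3 (transv_sym_lt a_lt) (transv_sym_lt a'_lt)).
rewrite /transv_sym; move: (NE k).
by case: (transv_colP k a); case: (transv_colP k a') => *; lia.
Qed.

Lemma Vsq_transversal : exists S, is_ls_transversal (Vsq k) S.
Proof.
pose col (r : 'I_(N k)) : 'I_(N k) := inord (transv_col k r).
have col_val r : col r = transv_col k r :> nat by rewrite /col inordK // transv_col_lt.
have col_inj : injective col.
  move=> r r' /(congr1 (@nat_of_ord _)); rewrite !col_val => /transv_col_inj eq_rr'.
  exact/val_inj/eq_rr'.
have sym_val r : Vsym k r (col r) = transv_sym k r %% N k :> nat.
  have off_ge0 : (0 <= Voff_max k r)%R by case: (transv_colP k r).
  apply/eqP; rewrite -eqz_nat val_Vsym col_val Voff_transv_col // -modz_nat /transv_sym.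
  by rewrite !PoszD -(gez0_abs off_ge0).
have sym_inj : injective (fun r => Vsym k r (col r)).
  move=> r r' /(congr1 (@nat_of_ord _)); rewrite !sym_val => /transv_sym_inj eq_rr'.
  exact/val_inj/eq_rr'.
by eexists; apply: (graph_transversal col_inj sym_inj) => r; rewrite inE.
Qed.

End Transversal.

Section Diagonal.
Variable k : nat.
Hypothesis k_gt0 : 0 < k.

Lemma Vsq_Delta e : e \in Vsq k -> Delta e = Voff k (erow e) (ecol e).
Proof.
rewrite inE => /eqP Es; apply: DeltaE; first by rewrite Es val_Vsym.
by move: (Voff_range k (erow e) (ecol e)) (NE k); lia.
Qed.

Lemma Vsq_mkentry e (d : nat) : e \in Vsq k -> Voff k (erow e) (ecol e) = Posz d ->
  e = mkentry k (erow e) (ecol e) (erow e + ecol e + d).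
Proof.
case: e => [[r c] s]; rewrite inE /erow /ecol /= => /eqP -> Voff_d.
move: (val_Vsym r c); rewrite Voff_d -PoszD modz_nat => -[].
move: (Vsym k r c) => s' val_s'.
rewrite /mkentry; congr (_, _, _); apply: val_inj; rewrite /= inordK ?ltn_mod //.
- by rewrite modn_small.
- by rewrite modn_small.
Qed.

Variable S : {set entry (N k)}.
Hypothesis diagS : is_ls_suitable_diagonal (Vsq k) S.

Lemma Vsq_diagonal_Voff_max :
  {in S, forall e, Voff k (erow e) (ecol e) = Voff_max k (erow e)}.
Proof.
have [subSV _ _ _] := diagS.
move=> e eS; rewrite -Vsq_Delta ?(subsetP subSV) //.
apply: (diagonal_Delta_max (lo := fun r => Voff_min k r) (hi := fun r => Voff_max k r)
         diagS _ _ _ eS).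
- by move=> f fV; rewrite Vsq_Delta //; apply: Voff_bounds.
- exact: sum_Voff_max.
- by rewrite sum_Voff_min // NE; lia.
Qed.

Lemma Vsq_diagonal_row_entry a b (d : nat) :
  a < N k -> Voff_max k a = Posz d -> (forall c, Voff k a c = Posz d -> c = b) ->
  mkentry k a b (a + b + d) \in S.
Proof.
move=> a_lt max_a max_col; have [subSV _ _ _] := diagS.
have [e eS row_e] := diagonal_row_exists diagS (inord a).
have row_a : erow e = a :> nat by rewrite row_e inordK.
have Voff_e : Voff k (erow e) (ecol e) = Posz d.
  by rewrite Vsq_diagonal_Voff_max // row_a.
have col_b : ecol e = b :> nat by apply: max_col; rewrite -row_a.
by rewrite -row_a -col_b -(Vsq_mkentry (subsetP subSV e eS) Voff_e).
Qed.

End Diagonal.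

Theorem lemma9 (k : nat) (hk : 1 <= k) :
  (exists S : {set entry (N k)}, is_ls_transversal (Vsq k) S) /\
  (forall S : {set entry (N k)}, is_ls_suitable_diagonal (Vsq k) S ->
     mkentry k 1 0 3 \in S /\
     (forall j : nat, 1 <= j <= k - 1 ->
        mkentry k (3 * j + 2) (N k - 6 * j) (N k - 3 * j + 3) \in S)).
Proof.
split; first exact: Vsq_transversal.
move=> S diagS; split.
  by apply: (Vsq_diagonal_row_entry hk diagS (d := 2)) => //; apply: Voff_row1_max.
move=> j j_range.
have row_mid : 4 <= 3 * j + 2 <= 3 * k by lia.
have row_mod3 : (3 * j + 2) %% 3 = 2 by lia.
have -> : N k - 3 * j + 3 = 3 * j + 2 + (N k - 6 * j) + 1 by rewrite NE; lia.
apply: (Vsq_diagonal_row_entry hk diagS) => [||c].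
- by rewrite NE; lia.
- by rewrite /Voff_max row_mod3 /=; case_ifs.
- by move/(Voff_row2mod3_max row_mid row_mod3) ->; rewrite NE; lia.
Qed.
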